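(* Let $\mathcal{SB}=\langle\mathcal{L},A,\to,\text{supp}\rangle$ be a saturated SBAF, $E\subseteq A$ admissible and $a\in A$. If $E$ defends $a$, then $E$ contains no undercutting information for $a$, i.e. $\overline{n(a)}\cap Sent(E)=\emptyset$.
   Context: A language is a triple $\mathcal{L}=\langle L,\overline{\cdot},n\rangle$: $L$ is a nonempty set of sentences; $\overline{\cdot}$ assigns to each $s\in L$ a set $\overline{s}\subseteq L$ of sentences incompatible with $s$, and is symmetric; $n$ is a partial naming function assigning to an argument $a$ a sentence $n(a)\in L$ (if undefined, put $\overline{n(a)}:=\emptyset$), with $\overline{n(\langle\{t\},t\rangle)}=\emptyset$. An argument is a pair $a=\langle Prem(a),Conc(a)\rangle$ with $Prem(a)$ a nonempty finite subset of $L$ and $Conc(a)\in L$; $Sent(a):=Prem(a)\cup\{Conc(a)\}$, $Sent(E):=\bigcup_{a\in E}Sent(a)$. The minimal argument for $s$ is $\langle\{s\},s\rangle$. Argument $a$ attacks $b$ ($a\to b$) if $Conc(a)\in\overline{s}$ for some $s\in Sent(b)$ or $Conc(a)\in\overline{n(b)}$. An SBAF is $\langle\mathcal{L},A,\to,\text{supp}\rangle$ with $A$ a finite set of arguments. For $E\subseteq A$: $E$ defends $a\in A$ if for every $b\in A$ with $b\to a$ some element of $E$ attacks $b$; $E$ is conflict-free if no $a,b\in E$ with $a\to b$; admissible if conflict-free and defends all its elements. The SBAF is saturated if (i) for every $s\in Sent(A)$ for which some $t\in Sent(A)\cap\overline{s}$ exists, $A$ contains the minimal argument for $s$ or the minimal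 argument for $t$, and (ii) for every $u\in Sent(A)$ with $u\in\overline{n(a)}$ for some $a\in A$, $A$ contains the minimal argument for $u$. *)

From HB Require Import structures.
From mathcomp Require Import all_boot finmap.
Set Implicit Arguments. Unset Strict Implicit. Unset Printing Implicit Defensive.
Local Open Scope fset_scope.

Section Defs.
Variable S : choiceType. (* the sentences *)

Definition arg := ({fset S} * S)%type.
Definition Prem (a : arg) : {fset S} := a.1.
Definition Conc (a : arg) : S := a.2.
Definition Sent (a : arg) : {fset S} := Prem a `|` [fset Conc a].
Definition minarg (s : S) : arg := ([fset s], s).

Definition SentE (E : {fset arg}) (s : S) : Prop :=
  exists2 a, a \in E & s \in Sent a.

(* A language: [inc s t] means t \in overline(s); [name] is the partial naming
   function; [L_nonempty] witnesses that the set of sentences is nonempty. *)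
Record language := Language {
  L_nonempty : S;
  inc : S -> S -> Prop;
  inc_sym : forall s t, inc s t -> inc t s;
  name : arg -> option S;
  name_min : forall t u,
    match name (minarg t) with Some v => ~ inc v u | None => True end
}.

Definition inc_name (L : language) (a : arg) (u : S) : Prop :=
  match name L a with Some v => inc L v u | None => False end.

Definition attacks (L : language) (a b : arg) : Prop :=
  (exists2 s, s \in Sent b & inc L s (Conc a)) \/ inc_name L b (Conc a).

(* An SBAF; the support relation plays no role here but is part of the data. *)
Record SBAF := MkSBAF {
  lang : language;
  args : {fset arg};
  args_prem : forall a, a \in args -> Prem a != fset0;
  supp : arg -> arg -> Prop
}.

Definition defends (F : SBAF) (E : {fset arg}) (a : arg) : Prop :=
  forall b, b \in args F -> attacks (lang F) b a ->
    exists2 c, c \in E & attacks (lang F) c b.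

Definition conflict_free (F : SBAF) (E : {fset arg}) : Prop :=
  forall a b, a \in E -> b \in E -> ~ attacks (lang F) a b.

Definition admissible (F : SBAF) (E : {fset arg}) : Prop :=
  conflict_free F E /\ forall a, a \in E -> defends F E a.

Definition saturated (F : SBAF) : Prop :=
  (forall s t, SentE (args F) s -> SentE (args F) t -> inc (lang F) s t ->
     minarg s \in args F \/ minarg t \in args F) /\
  (forall u a, SentE (args F) u -> a \in args F -> inc_name (lang F) a u ->
     minarg u \in args F).

End Defs.

(* If u in overline(n(a)) occurred in some e of E, saturation would put the
   minimal argument <{u},u> in A; it undercuts a, so E must attack it. A
   minimal argument cannot be undercut, so the attacker c in E concludes a
   sentence incompatible with u, and therefore attacks e, contradicting the
   conflict-freeness of E. *)
From mathcomp Require Import all_boot finmap.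
Set Implicit Arguments. Unset Strict Implicit. Unset Printing Implicit Defensive.
Local Open Scope fset_scope.

Section MinimalArguments.
Variables (S : choiceType) (L : language S).

Lemma Sent_minarg (s t : S) : (s \in Sent (minarg t)) = (s == t).
Proof. by rewrite /Sent /Prem /Conc /minarg /= !inE orbb. Qed.

Lemma attacks_minargE (c : arg S) (u : S) :
  attacks L c (minarg u) -> inc L u (Conc c).
Proof.
case=> [[s] | ].
- by rewrite Sent_minarg => /eqP->.
- rewrite /inc_name; have := name_min L u (Conc c).
  by case: (name L (minarg u)).
Qed.

Lemma attacks_Sent (c e : arg S) (u : S) :
  u \in Sent e -> inc L u (Conc c) -> attacks L c e.
Proof. by move=> ue incu; left; exists u. Qed.

End MinimalArguments.

Lemma SentE_sub (S : choiceType) (E A : {fset arg S}) (u : S) :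
  E `<=` A -> SentE E u -> SentE A u.
Proof. by move=> /fsubsetP EA [e eE ue]; exists e; first exact: EA. Qed.

Theorem mainTheorem11 (S : choiceType) (F : SBAF S) (E : {fset arg S}) (a : arg S) :
  saturated F -> E `<=` args F -> admissible F E -> a \in args F ->
  defends F E a ->
  forall u, inc_name (lang F) a u -> ~ SentE E u.
Proof.
move=> [_ sat_name] EA [cfE _] aA defE u iu uE.
have uA : minarg u \in args F.
  by apply: (sat_name u a) => //; exact: SentE_sub uE.
have minarg_attacks_a : attacks (lang F) (minarg u) a by right.
have [c cE /attacks_minargE incu] := defE _ uA minarg_attacks_a.
case: uE => e eE ue.
exact: (cfE c e cE eE (attacks_Sent ue incu)).
Qed.
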